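(* For every integer $n\ge 2$ and $L=|\tau^n(a)|=2^{n+1}-1$, one has $\mathcal{C}(L)=2^{n+2}+2^n-2$.
   Context: Let $\mathcal{A}=\{a,x,y,z\}$ and let $\tau$ be the substitution (monoid morphism on finite words over $\mathcal{A}$) defined by $\tau(a)=axa$, $\tau(x)=y$, $\tau(y)=z$, $\tau(z)=x$. For a finite word $w$, $\mathrm{Sub}(w)$ denotes the set of finite (contiguous) subwords of $w$. Let $\mathrm{Sub}_\tau=\bigcup_{s\in\mathcal{A},\,n\in\mathbb{N}\cup\{0\}}\mathrm{Sub}(\tau^n(s))$. The word complexity is $\mathcal{C}(L)=$ the number of elements of $\mathrm{Sub}_\tau$ of length $L$. *)

From HB Require Import structures.
From mathcomp Require Import all_boot.
Set Implicit Arguments. Unset Strict Implicit. Unset Printing Implicit Defensive.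

Inductive letter := La | Lx | Ly | Lz.

Definition letter_to_ord (c : letter) : 'I_4 :=
  match c with La => inord 0 | Lx => inord 1 | Ly => inord 2 | Lz => inord 3 end.
Definition ord_to_letter (i : 'I_4) : letter :=
  match val i with 0 => La | 1 => Lx | 2 => Ly | _ => Lz end.
Lemma letter_ordK : cancel letter_to_ord ord_to_letter.
Proof. by case; rewrite /ord_to_letter /= inordK. Qed.
HB.instance Definition _ := Equality.copy letter (can_type letter_ordK).
HB.instance Definition _ := Choice.copy letter (can_type letter_ordK).
HB.instance Definition _ := Countable.copy letter (can_type letter_ordK).
HB.instance Definition _ := Finite.copy letter (can_type letter_ordK).

Definition tau_letter (c : letter) : seq letter :=
  match c with
  | La => [:: La; Lx; La]
  | Lx => [:: Ly]
  | Ly => [:: Lz]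
  | Lz => [:: Lx]
  end.

Definition tau (w : seq letter) : seq letter := flatten (map tau_letter w).

Definition tau_iter (n : nat) (w : seq letter) : seq letter := iter n tau w.

Definition in_Sub_tau (w : seq letter) : Prop :=
  exists (s : letter) (n : nat), infix w (tau_iter n [:: s]).

Definition complexity_is (L k : nat) : Prop :=
  exists S : {set L.-tuple letter},
    (forall w : L.-tuple letter, w \in S <-> in_Sub_tau w) /\ #|S| = k.

(* The fixed point u of tau starting with a has a at every even position and, at position 2j+1,
   the letter x rotated (x -> y -> z -> x) as many times as the 2-adic valuation of j+1; tau^n(a)
   is its prefix of length 2^(n+1) - 1, and the words of length >= 2 in Sub_tau are exactly the
   factors of u. Both u and its word v of odd positions have the shape f(2j) = c,
   f(2j+1) = h(g j) with h injective and c never read at two consecutive odd positions, so a factor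
   of length m >= 3 determines the parity of its position and is c interleaved with a factor of g
   of length floor(m/2) or ceil(m/2). Hence C_u(m) = C_v(floor(m/2)) + C_v(ceil(m/2)), and v
   satisfies the same recursion with C_v(1) = 3 and C_v(2) = 5, so that C_v(2^k) = 5 2^(k-1) and
   C_v(2^k - 1) = 5 2^(k-1) - 2. *)

From mathcomp Require Import all_boot zify boolp.
Set Implicit Arguments. Unset Strict Implicit. Unset Printing Implicit Defensive.

Definition factor_at (T : Type) (f : nat -> T) (p m : nat) : seq T :=
  mkseq (fun i => f (p + i)) m.

Section FactorsOfSequences.
Variables (T : Type) (f : nat -> T).

Lemma size_factor_at p m : size (factor_at f p m) = m.
Proof. exact: size_mkseq. Qed.

Lemma nth_factor_at x0 p m i : i < m -> nth x0 (factor_at f p m) i = f (p + i).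
Proof. exact: nth_mkseq. Qed.

Lemma mkseq_factor_at n : mkseq f n = factor_at f 0 n.
Proof. by apply: eq_mkseq => i; rewrite add0n. Qed.

Lemma factor_atD p m n : factor_at f p (m + n) = factor_at f p m ++ factor_at f (p + m) n.
Proof.
rewrite /factor_at /mkseq iotaD map_cat add0n -{2}[m]addn0 iotaDl -map_comp.
by congr (_ ++ _); apply: eq_map => i /=; rewrite addnA.
Qed.

Lemma factor_atS p m : factor_at f p.+1 m = behead (factor_at f p m.+1).
Proof. by rewrite -[m.+1]add1n factor_atD addn1. Qed.

End FactorsOfSequences.

Lemma infix_mkseqP (T : eqType) (f : nat -> T) (w : seq T) n :
  infix w (mkseq f n) <-> exists2 p, p + size w <= n & w = factor_at f p (size w).
Proof.
split.
  move=> /infixP [s [s' def_f]].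
  have size_f : size s + size w + size s' = n.
    by rewrite -(size_mkseq f n) def_f !size_cat addnA.
  exists (size s); first by rewrite -size_f leq_addr.
  apply: (@eq_from_nth _ (f 0)); rewrite ?size_factor_at // => i lt_i_w.
  have lt_sw_n : size s + i < n by rewrite -size_f -addnA ltn_add2l ltn_addr.
  rewrite nth_factor_at // -(nth_mkseq (f 0) f lt_sw_n) def_f.
  by rewrite nth_cat ltnNge leq_addr /= addKn nth_cat lt_i_w.
case=> p le_pw_n ->.
by rewrite mkseq_factor_at -(subnKC le_pw_n) -addnA !factor_atD add0n infix_infix.
Qed.

Definition factors_in (T : finType) (P : pred nat) (f : nat -> T) (m : nat)
  : {set m.-tuple T} :=
  [set t | `[< exists2 p, P p & val t = factor_at f p m >]].

Notation factors := (factors_in predT).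

Section FactorSets.
Variable T : finType.
Implicit Types (f g : nat -> T) (P : pred nat).

Lemma mem_factors_inP P f m (t : m.-tuple T) :
  reflect (exists2 p, P p & val t = factor_at f p m) (t \in factors_in P f m).
Proof. by rewrite inE; apply: asboolP. Qed.

Lemma mem_factorsP f m (t : m.-tuple T) :
  reflect (exists p, val t = factor_at f p m) (t \in factors f m).
Proof.
by apply: (iffP (mem_factors_inP _ _ _)) => [[p _]|[p]] ht; exists p.
Qed.

Definition factor_tuple f p m : m.-tuple T := Tuple (introT eqP (size_factor_at f p m)).

Lemma factors_parityU f m :
  factors f m =
  factors_in (fun p => odd p == false) f m :|: factors_in (fun p => odd p == true) f m.
Proof.
apply/setP => t; rewrite in_setU; apply/mem_factorsP/orP => [[p ht]|].
  by case: (boolP (odd p)) => [odd_p | /negbTE odd_p]; [right | left];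
    apply/mem_factors_inP; exists p; rewrite ?odd_p.
by case=> /mem_factors_inP [p _ ht]; exists p.
Qed.

Lemma card_factors_parity (b : bool) f g m k (E : seq T -> seq T) :
  (forall s, size (E s) = m) -> {in [pred s | size s == k] &, injective E} ->
  (forall q, factor_at f (b + q.*2) m = E (factor_at g q k)) ->
  #|factors_in (fun p => odd p == b) f m| = #|factors g k|.
Proof.
move=> size_E E_inj E_factor.
pose F (u : k.-tuple T) : m.-tuple T := Tuple (introT eqP (size_E u)).
have F_inj : injective F.
  move=> u v /(congr1 val) /= /E_inj eq_uv; apply: val_inj.
  by apply: eq_uv; rewrite inE size_tuple.
rewrite -(card_imset _ F_inj); congr #|pred_of_set _|; apply/setP => t.
apply/mem_factors_inP/imsetP => [[p /eqP odd_p ht] | [u /mem_factorsP [q hu] ->]].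
  exists (factor_tuple g p./2 k); first by apply/mem_factorsP; exists p./2.
  by apply: val_inj; rewrite /= -E_factor -odd_p odd_double_half ht.
exists (b + q.*2); first by rewrite oddD odd_double addbF oddb.
by rewrite /= hu E_factor.
Qed.

Lemma card_factors_enum f m (ps : seq nat) :
  uniq [seq factor_at f p m | p <- ps] ->
  (forall p, factor_at f p m \in [seq factor_at f q m | q <- ps]) ->
  #|factors f m| = size ps.
Proof.
move=> ps_uniq ps_complete; rewrite cardE -(size_map val) -(size_map (factor_at f ^~ m)).
apply/perm_size/uniq_perm => //; first by rewrite (map_inj_uniq val_inj) enum_uniq.
move=> s; apply/mapP/idP => [[t] | /mapP [p _ ->]].
  by rewrite mem_enum => /mem_factorsP [p ->] ->.
by exists (factor_tuple f p m); rewrite // mem_enum; apply/mem_factorsP; exists p.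
Qed.

End FactorSets.

Section Desubstitution.
Variables (T : finType) (f g : nat -> T) (c : T) (h : T -> T).
Hypotheses (f_double : forall j, f j.*2 = c) (f_doubleS : forall j, f j.*2.+1 = h (g j)).

Definition interleave (s : seq T) (m : nat) : seq T :=
  mkseq (fun i => if odd i then h (nth c s i./2) else c) m.

Lemma factor_at_double q m : factor_at f q.*2 m = interleave (factor_at g q m./2) m.
Proof.
apply/eq_in_map => i; rewrite mem_iota add0n /= => lt_i_m.
rewrite -[i in LHS](odd_double_half i); case: (boolP (odd i)) => odd_i.
  rewrite add1n addnS -doubleD f_doubleS nth_factor_at // gtn_half_double.
  by move: lt_i_m; rewrite -{1}(odd_double_half i) odd_i.
by rewrite add0n -doubleD f_double.
Qed.

Lemma factor_at_doubleS q m :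
  factor_at f q.*2.+1 m = behead (interleave (factor_at g q m.+1./2) m.+1).
Proof. by rewrite factor_atS factor_at_double. Qed.

Hypothesis h_inj : injective h.

Lemma interleave_inj m : {in [pred s | size s == m./2] &, injective (interleave^~ m)}.
Proof.
move=> s t /eqP size_s /eqP size_t eq_st.
apply: (@eq_from_nth _ c); rewrite ?size_s ?size_t //.
move=> j lt_j_half; have lt_jS_m : j.*2.+1 < m by rewrite -gtn_half_double.
move: (congr1 (nth c ^~ j.*2.+1) eq_st).
by rewrite /interleave !nth_mkseq //= odd_double /= uphalf_double => /h_inj.
Qed.

Lemma behead_interleave_inj m :
  {in [pred s | size s == m.+1./2] &, injective (fun s => behead (interleave s m.+1))}.
Proof.
move=> s t size_s size_t /= eq_st; apply: (@interleave_inj m.+1) => //.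
by move: eq_st; rewrite /interleave /mkseq /= => ->.
Qed.

(* It makes a factor of length at least 3 read c _ c exactly when its position is even. *)
Hypothesis no_consecutive_c : forall q, h (g q) = c -> h (g q.+1) = c -> False.

Lemma card_factors_desubst m :
  2 < m -> #|factors f m| = #|factors g m./2| + #|factors g m.+1./2|.
Proof.
move=> lt2m; rewrite factors_parityU cardsU.
have /disjoint_setI0 -> :
    [disjoint factors_in (fun p => odd p == false) f m
            & factors_in (fun p => odd p == true) f m].
  apply/pred0P => t /=; apply/negbTE/andP.
  case=> /mem_factors_inP [p /eqP even_p ht] /mem_factors_inP [p' /eqP odd_p' ht'].
  move: ht'; rewrite ht -(odd_double_half p) -(odd_double_half p') even_p odd_p' add0n add1n.
  set q := p./2; set q' := p'./2 => eq_factors.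
  have /(congr1 (nth c ^~ 0)) := eq_factors; have /(congr1 (nth c ^~ 2)) := eq_factors.
  rewrite !nth_factor_at ?lt2m ?(ltn_trans _ lt2m) // !addn0 !addn2 -!doubleS.
  rewrite !f_double !f_doubleS => /esym hq'S /esym hq'.
  exact: no_consecutive_c hq' hq'S.
rewrite cards0 subn0; congr (_ + _).
  apply: (card_factors_parity (E := interleave^~ m)) => [s | | q]; first exact: size_mkseq.
    exact: interleave_inj.
  exact: factor_at_double.
apply: (card_factors_parity (E := fun s => behead (interleave s m.+1))) => [s | | q].
- by rewrite size_behead size_mkseq.
- exact: behead_interleave_inj.
- exact: factor_at_doubleS.
Qed.

End Desubstitution.

(* The equality of letter is inherited from 'I_4 through inord and does not compute. *)
Definition letter_eqb (c d : letter) : bool :=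
  match c, d with La, La | Lx, Lx | Ly, Ly | Lz, Lz => true | _, _ => false end.

Lemma letter_eqE c d : (c == d) = letter_eqb c d.
Proof. by case: c; case: d; rewrite ?eqxx //; apply/eqP. Qed.

Definition rotate_xyz (c : letter) : letter :=
  match c with La => La | Lx => Ly | Ly => Lz | Lz => Lx end.

Lemma rotate_xyz_inj : injective rotate_xyz.
Proof. by case; case. Qed.

Lemma iter_rotate_xyz_neqa n c : c != La -> iter n rotate_xyz c != La.
Proof.
by move=> c_neqa; elim: n => //= n; case: (iter n rotate_xyz c); rewrite !letter_eqE.
Qed.

Lemma tau_cat s t : tau (s ++ t) = tau s ++ tau t.
Proof. by rewrite /tau map_cat flatten_cat. Qed.

Lemma tau_rcons s c : tau (rcons s c) = tau s ++ tau_letter c.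
Proof. by rewrite -cats1 tau_cat /tau /= cats0. Qed.

Lemma tau_iter_neqa n c : c != La -> tau_iter n [:: c] = [:: iter n rotate_xyz c].
Proof.
move=> c_neqa; elim: n => //= n IHn; rewrite /tau_iter /= -/(tau_iter n _) IHn.
by move: (iter_rotate_xyz_neqa n c_neqa); case: (iter n rotate_xyz c); rewrite ?letter_eqE.
Qed.

Definition tau_fix_odd (j : nat) : letter := iter (logn 2 j.+1) rotate_xyz Lx.

(* The fixed point of tau starting with a (see tau_iter_a). *)
Definition tau_fix (i : nat) : letter := if odd i then tau_fix_odd i./2 else La.

Lemma tau_fix_double j : tau_fix j.*2 = La.
Proof. by rewrite /tau_fix odd_double. Qed.

Lemma tau_fix_doubleS j : tau_fix j.*2.+1 = tau_fix_odd j.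
Proof. by rewrite /tau_fix /= odd_double uphalf_double. Qed.

Lemma tau_fix_odd_double j : tau_fix_odd j.*2 = Lx.
Proof. by rewrite /tau_fix_odd logn_coprime // coprime2n /= odd_double. Qed.

Lemma tau_fix_odd_doubleS j : tau_fix_odd j.*2.+1 = rotate_xyz (tau_fix_odd j).
Proof. by rewrite /tau_fix_odd -doubleS -mul2n lognM // (logn_prime 2 (isT : prime 2)). Qed.

Lemma tau_fix_odd_neqa j : tau_fix_odd j != La.
Proof. by apply: iter_rotate_xyz_neqa; rewrite letter_eqE. Qed.

Lemma tau_fix_odd_cases j :
  [\/ tau_fix_odd j = Lx, tau_fix_odd j = Ly | tau_fix_odd j = Lz].
Proof.
move: (tau_fix_odd_neqa j); case: (tau_fix_odd j); rewrite ?eqxx // => _;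
  by [constructor 1 | constructor 2 | constructor 3].
Qed.

Lemma tau_tau_fix m : tau (mkseq tau_fix m.*2.+1) = mkseq tau_fix (m.*2.+1).*2.+1.
Proof.
elim: m => // m IHm.
rewrite doubleS; have -> : (m.*2.+3).*2.+1 = ((m.*2.+1).*2.+1).+4 by rewrite !doubleS.
rewrite 4![in RHS]mkseqS -IHm 2![in LHS]mkseqS !tau_rcons -!cats1 -!doubleS.
rewrite !tau_fix_double !tau_fix_doubleS !tau_fix_odd_double !tau_fix_odd_doubleS.
by case: (tau_fix_odd_cases m) => ->; rewrite -!catA.
Qed.

Lemma expn2S_sub1 k : 2 ^ k.+1 - 1 = (2 ^ k - 1).*2.+1.
Proof. by rewrite expnS -mul2n; have := expn_gt0 2 k; lia. Qed.

Lemma leq_expn2S_sub1 k : k <= 2 ^ k.+1 - 1.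
Proof. by have := ltn_expl k (ltnSn 1); rewrite expnS; move: (2 ^ k) => X; lia. Qed.

Lemma tau_iter_a n : tau_iter n [:: La] = mkseq tau_fix (2 ^ n.+1 - 1).
Proof.
elim: n => // n IHn.
by rewrite /tau_iter iterS -/(tau_iter n _) IHn (expn2S_sub1 n.+1) expn2S_sub1 tau_tau_fix.
Qed.

Lemma in_Sub_tauE w :
  1 < size w -> in_Sub_tau w <-> exists p, w = factor_at tau_fix p (size w).
Proof.
move=> w_gt1; split=> [[s [n]] | [p def_w]].
  case: (eqVneq s La) => [-> | s_neqa].
    by rewrite tau_iter_a => /infix_mkseqP [p _ def_w]; exists p.
  by rewrite tau_iter_neqa // => /size_infix /(leq_trans w_gt1).
exists La, (p + size w); rewrite tau_iter_a; apply/infix_mkseqP; exists p => //.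
exact: leq_expn2S_sub1.
Qed.

Lemma card_factors_tau_fix m : 2 < m ->
  #|factors tau_fix m| = #|factors tau_fix_odd m./2| + #|factors tau_fix_odd m.+1./2|.
Proof.
apply: (card_factors_desubst (c := La) (h := id)) => //.
- exact: tau_fix_double.
- exact: tau_fix_doubleS.
- by move=> q /eqP; rewrite (negbTE (tau_fix_odd_neqa q)).
Qed.

Lemma card_factors_tau_fix_odd m : 2 < m ->
  #|factors tau_fix_odd m| = #|factors tau_fix_odd m./2| + #|factors tau_fix_odd m.+1./2|.
Proof.
apply: (card_factors_desubst (c := Lx) (h := rotate_xyz)).
- exact: tau_fix_odd_double.
- exact: tau_fix_odd_doubleS.
- exact: rotate_xyz_inj.
move=> q; rewrite -(odd_double_half q); case: (odd q).
  by rewrite add1n -doubleS tau_fix_odd_double.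
by rewrite add0n tau_fix_odd_double.
Qed.

Lemma card_factors_tau_fix_odd1 : #|factors tau_fix_odd 1| = 3.
Proof.
have enum1 :
  [seq factor_at tau_fix_odd p 1 | p <- [:: 0; 1; 3]] = [:: [:: Lx]; [:: Ly]; [:: Lz]] by [].
rewrite (@card_factors_enum _ _ _ [:: 0; 1; 3]) // enum1.
  by rewrite /= !inE !eqseq_cons !letter_eqE.
move=> p; rewrite /factor_at /mkseq /=.
by case: (tau_fix_odd_cases (p + 0)) => ->; rewrite !inE eqxx ?orbT.
Qed.

Lemma card_factors_tau_fix_odd2 : #|factors tau_fix_odd 2| = 5.
Proof.
have enum2 : [seq factor_at tau_fix_odd p 2 | p <- [:: 6; 0; 2; 1; 3]] =
    [:: [:: Lx; Lx]; [:: Lx; Ly]; [:: Lx; Lz]; [:: Ly; Lx]; [:: Lz; Lx]] by [].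
rewrite (@card_factors_enum _ _ _ [:: 6; 0; 2; 1; 3]) // enum2.
  by rewrite /= !inE !eqseq_cons !letter_eqE.
move=> p; rewrite /factor_at /mkseq /= addn0 addn1 -(odd_double_half p); case: (odd p).
  rewrite add1n -doubleS tau_fix_odd_double tau_fix_odd_doubleS.
  by case: (tau_fix_odd_cases p./2) => ->; rewrite !inE eqxx ?orbT.
rewrite add0n tau_fix_odd_double tau_fix_odd_doubleS.
by case: (tau_fix_odd_cases p./2) => ->; rewrite !inE eqxx ?orbT.
Qed.

Lemma card_factors_tau_fix_odd_expn k : #|factors tau_fix_odd (2 ^ k.+1)| = 5 * 2 ^ k.
Proof.
elim: k => [|k IHk]; first exact: card_factors_tau_fix_odd2.
have pow_gt2 : 2 < 2 ^ k.+2 by rewrite !expnS; have := expn_gt0 2 k; lia.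
rewrite card_factors_tau_fix_odd // [2 ^ k.+2]expnS mul2n /= doubleK uphalf_double IHk.
by rewrite expnS; lia.
Qed.

Lemma card_factors_tau_fix_odd_expn_sub1 k :
  #|factors tau_fix_odd (2 ^ k.+2 - 1)| = 5 * 2 ^ k.+1 - 2.
Proof.
elim: k => [|k IHk].
  by rewrite card_factors_tau_fix_odd // card_factors_tau_fix_odd1 card_factors_tau_fix_odd2.
have pow_gt0 := expn_gt0 2 k.
rewrite expn2S_sub1 card_factors_tau_fix_odd; last by rewrite -expn2S_sub1 !expnS; lia.
rewrite /= uphalf_double doubleK subn1 prednK ?expn_gt0 // -subn1 IHk.
by rewrite card_factors_tau_fix_odd_expn !expnS; lia.
Qed.

Theorem mainTheorem6 (n : nat) (L : nat) :
  2 <= n ->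
  L = size (tau_iter n [:: La]) ->
  L = 2 ^ n.+1 - 1 /\ complexity_is L (2 ^ n.+2 + 2 ^ n - 2).
Proof.
move=> n_ge2 ->; rewrite tau_iter_a size_mkseq; split=> //.
case: n n_ge2 => [|[|k]] // _.
have pow_gt0 := expn_gt0 2 k.
exists (factors tau_fix (2 ^ k.+3 - 1)); split.
  move=> w; rewrite in_Sub_tauE size_tuple; last by rewrite !expnS; lia.
  by split=> [/mem_factorsP | /mem_factorsP].
rewrite card_factors_tau_fix; last by rewrite !expnS; lia.
rewrite expn2S_sub1 /= uphalf_double doubleK subn1 prednK ?expn_gt0 // -subn1.
rewrite card_factors_tau_fix_odd_expn_sub1 card_factors_tau_fix_odd_expn.
by rewrite !expnS; lia.
Qed.
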